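(* Let $\Gamma$ be a valued structure with finite signature $\tau$ and domain $C$, let $\Delta$ be a valued $\tau$-structure with finite domain $D$ such that there is a fractional homomorphism from $\Delta$ to $\Gamma$, and let $m\ge2$ be an integer. If $\Gamma$ has an $m$-ary fully symmetric fractional polymorphism, then there is a fractional homomorphism from $\mathcal{P}^m(\Delta)$ to $\Gamma$.
   Context: A valued structure consists of a signature $\tau$ of function symbols with arities, a domain, and for each $f\in\tau$ a cost function from the domain to the power $\mathrm{ar}(f)$ into $\mathbb{Q}\cup\{+\infty\}$. A fractional homomorphism from a valued $\tau$-structure $\Delta$ (domain $D$) to $\Gamma$ (domain $C$) is a map $\omega\colon C^D\to\mathbb{Q}_{\ge0}$ with finite support and $\sum_g\omega(g)=1$ such that $\sum_g\omega(g)f^\Gamma(g(a))\le f^\Delta(a)$ for all $f\in\tau$, $a\in D^{\mathrm{ar}(f)}$ ($g$ applied componentwise). An $m$-ary fractional polymorphism of $\Gamma$ is a map $\omega$ from operations $C^m\to C$ to $\mathbb{Q}_{\ge0}$ with finite support, $\sum_g\omega(g)=1$, and $\sum_g\omega(g)f^\Gamma(g(a^1,\dots,a^m))\le\frac1m\sum_{i=1}^m f^\Gamma(a^i)$ for all $f\in\tau$, $a^1,\dots,a^m\in C^{\mathrm{ar}(f)}$. It is fully symmetric if every operation in its support satisfies $g(x_1,\dots,x_m)=g(x_{\pi(1)},\dots,x_{\pi(m)})$ for all permutations $\pi$. The multiset structure $\mathcal{P}^m(\Delta)$ is the valued $\tau$-structure whose domain is the set of multisets of size $m$ of elements of $D$,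 with, for $k$-ary $f\in\tau$ and multisets $\alpha_1,\dots,\alpha_k$, $f^{\mathcal{P}^m(\Delta)}(\alpha_1,\dots,\alpha_k)=\frac1m\min\sum_{i=1}^m f^\Delta(t^1_i,\dots,t^k_i)$, the minimum over all $t^1,\dots,t^k\in D^m$ such that the multiset of coordinates of $t^l$ is $\alpha_l$ for each $l$. *)

(* valued structures with costs in Q ∪ {+oo}, encoded in \bar rat. *)
From Stdlib Require List.
From mathcomp Require Import all_boot all_order all_algebra all_fingroup.
From mathcomp Require Import constructive_ereal.
Set Implicit Arguments. Unset Strict Implicit. Unset Printing Implicit Defensive.
Import Order.TTheory GRing.Theory Num.Theory.
Local Open Scope ring_scope.
Local Open Scope ereal_scope.

Section Valued.
Variables (S : finType) (ar : S -> nat).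

Definition costs (T : Type) := forall f : S, (ar f).-tuple T -> \bar rat.

Definition valued_costs (T : Type) (c : costs T) : Prop :=
  forall f t, c f t != -oo.

(* A fractional homomorphism from (D, cD) to (C, cC), given as a finite list of
   weighted maps D -> C (the finitely supported map omega). *)
Definition frac_hom (D : finType) (C : Type) (cD : costs D) (cC : costs C)
    (w : seq (rat * (D -> C))) : Prop :=
  [/\ List.Forall (fun p => (0 <= p.1)%R) w,
      (\sum_(p <- w) p.1)%R = 1%R &
      forall (f : S) (a : (ar f).-tuple D),
        \sum_(p <- w) ((p.1)%:E * cC f (map_tuple p.2 a)) <= cD f a].

Definition exists_frac_hom (D : finType) (C : Type) (cD : costs D) (cC : costs C) :=
  exists w, frac_hom cD cC w.

Definition frac_pol (m : nat) (C : Type) (cC : costs C)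
    (w : seq (rat * (('I_m -> C) -> C))) : Prop :=
  [/\ List.Forall (fun p => (0 <= p.1)%R) w,
      (\sum_(p <- w) p.1)%R = 1%R &
      forall (f : S) (a : 'I_m -> (ar f).-tuple C),
        \sum_(p <- w) ((p.1)%:E * cC f [tuple p.2 (fun i => tnth (a i) j) | j < ar f])
        <= ((m%:R)^-1)%:E * \sum_(i < m) cC f (a i)].

Definition fully_symmetric (m : nat) (C : Type) (w : seq (rat * (('I_m -> C) -> C))) :=
  List.Forall (fun p => (0 < p.1)%R ->
     forall (x : 'I_m -> C) (s : 'S_m), p.2 x = p.2 (x \o s)) w.

Definition has_fs_frac_pol (m : nat) (C : Type) (cC : costs C) :=
  exists w : seq (rat * (('I_m -> C) -> C)), frac_pol cC w /\ fully_symmetric w.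

Definition mset (D : finType) (m : nat) :=
  {mu : {ffun D -> 'I_m.+1} | (\sum_(d : D) (mu d : nat))%N == m}.

Definition mult (D : finType) (m : nat) (al : mset D m) (d : D) : nat :=
  nat_of_ord (sval al d).

Definition Pm_cost (D : finType) (cD : costs D) (m : nat) : costs (mset D m) :=
  fun f al =>
    ((m%:R)^-1)%:E *
    \big[Order.min/+oo]_(t : (ar f).-tuple (m.-tuple D) |
         [forall l, forall d, count_mem d (tnth t l) == mult (tnth al l) d])
       \sum_(i < m) cD f [tuple tnth (tnth t j) i | j < ar f].

End Valued.

(* Pick a fractional homomorphism w from Delta to Gamma and a fully symmetric
   m-ary fractional polymorphism u of Gamma.  A multiset {a_1, ..., a_m} is sent
   to p (g a_1, ..., g a_m), with weight w(g) u(p), for g in the support of w and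
   p in the support of u; as p is symmetric, this does not depend on how the
   multiset is enumerated.  If m-tuples t^1, ..., t^k realize the multisets
   alpha_1, ..., alpha_k, the polymorphism inequality bounds the cost of the
   images by the average, over the m columns of the t^l, of the Gamma-cost of g
   applied to a column, and the homomorphism inequality bounds this by the
   average Delta-cost of the columns.  Minimizing over the realizations gives
   the cost of alpha_1, ..., alpha_k in P^m(Delta). *)

From mathcomp Require Import all_boot all_order all_algebra all_fingroup.
From mathcomp Require Import constructive_ereal.
From Stdlib Require Import FunctionalExtensionality.
Set Implicit Arguments. Unset Strict Implicit. Unset Printing Implicit Defensive.
Import Order.TTheory GRing.Theory Num.Theory.

Local Open Scope ring_scope.
Local Open Scope ereal_scope.

Lemma ForallP (T : Type) (a : pred T) (s : seq T) :
  reflect (List.Forall (fun x => a x) s) (all a s).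
Proof.
elim: s => [|x s IH] /=; first by left; constructor.
apply: (iffP andP) => [[ax /IH]|/List.Forall_cons_iff[ax /IH]] //.
by constructor.
Qed.

Lemma big_cond_all (R I : Type) (idx : R) (op : R -> R -> R) (a : pred I)
    (s : seq I) (F : I -> R) :
  all a s -> \big[op/idx]_(i <- s) F i = \big[op/idx]_(i <- s | a i) F i.
Proof.
elim: s => [|i s IH] /=; first by rewrite !big_nil.
by case/andP=> ai /IH; rewrite !big_cons ai => ->.
Qed.
Arguments big_cond_all {R I idx op a s F}.

Lemma eq_big_Forall (R I : Type) (idx : R) (op : R -> R -> R) (Q : I -> Prop)
    (s : seq I) (F G : I -> R) :
  List.Forall Q s -> (forall i, Q i -> F i = G i) ->
  \big[op/idx]_(i <- s) F i = \big[op/idx]_(i <- s) G i.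
Proof.
move=> + eqFG; elim=> [|i s' Qi _ IH]; first by rewrite !big_nil.
by rewrite !big_cons eqFG // IH.
Qed.

Section ExtendedSums.
Variable R : realDomainType.

Lemma mule_neq_ninfty (c : R) (x : \bar R) :
  (0 <= c)%R -> x != -oo -> c%:E * x != -oo.
Proof.
move=> c_ge0 x_ninfty; rewrite mule_eq_ninfty (negbTE x_ninfty) andbF /=.
by rewrite !lte_fin ltNge c_ge0.
Qed.

Lemma sume_distrr_ninfty (I : Type) (s : seq I) (P : pred I) (c : R)
    (F : I -> \bar R) :
  (forall i, P i -> F i != -oo) ->
  c%:E * \sum_(i <- s | P i) F i = \sum_(i <- s | P i) c%:E * F i.
Proof.
move=> F_ninfty; apply: fin_num_sume_distrr => // i j Pi Pj.
by apply: ltninfty_adde_def; rewrite inE ltNye F_ninfty.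
Qed.

Lemma lee_mul_bigmin (I : finType) (P : pred I) (F : I -> \bar R) (c : R)
    (x : \bar R) :
  (0 < c)%R -> (forall i, P i -> x <= c%:E * F i) ->
  x <= c%:E * \big[Order.min/+oo]_(i | P i) F i.
Proof.
move=> c_gt0 xF; apply: (big_ind (fun v => x <= c%:E * v)) => //.
  by rewrite gt0_muley ?lte_fin // leey.
by move=> a b xa xb; rewrite /Order.min; case: ifP.
Qed.

End ExtendedSums.

Section ProductWeights.
Variables (R : realDomainType) (A B X : Type) (h : A -> B -> X).

Definition prod_weights (w : seq (R * A)) (u : seq (R * B)) : seq (R * X) :=
  [seq (pw.1 * pu.1, h pw.2 pu.2)%R | pw <- w, pu <- u].

Lemma prod_weights_ge0 w u :
  List.Forall (fun p => 0 <= p.1)%R w -> List.Forall (fun p => 0 <= p.1)%R u ->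
  List.Forall (fun p => 0 <= p.1)%R (prod_weights w u).
Proof.
move=> /ForallP w_ge0 /ForallP u_ge0; apply/ForallP.
rewrite -big_all big_allpairs_dep big_all; apply: sub_all w_ge0 => pw pw_ge0.
rewrite big_all; apply: sub_all u_ge0 => pu pu_ge0; exact: mulr_ge0.
Qed.

Lemma sum_prod_weights w u :
  (\sum_(q <- prod_weights w u) q.1
   = (\sum_(pw <- w) pw.1) * \sum_(pu <- u) pu.1)%R.
Proof.
rewrite big_allpairs_dep big_distrl; apply: eq_bigr => pw _ /=.
by rewrite big_distrr.
Qed.

Lemma sum_prod_weights_mul w u (F : X -> \bar R) :
  List.Forall (fun p => 0 <= p.1)%R u -> (forall x, F x != -oo) ->
  \sum_(q <- prod_weights w u) q.1%:E * F q.2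
  = \sum_(pw <- w) pw.1%:E * \sum_(pu <- u) pu.1%:E * F (h pw.2 pu.2).
Proof.
move=> /ForallP u_ge0 F_ninfty; rewrite big_allpairs_dep; apply: eq_bigr => pw _.
rewrite !(big_cond_all u_ge0) sume_distrr_ninfty => [|pu pu_ge0].
  by apply: eq_bigr => pu _ /=; rewrite EFinM muleA.
exact: mule_neq_ninfty.
Qed.

End ProductWeights.

Section FracHomMean.
Variables (S : finType) (ar : S -> nat) (C : Type) (cC : costs ar C).
Variables (D : finType) (cD : costs ar D).
Hypothesis cC_valued : valued_costs cC.
Arguments cC : clear implicits.
Arguments cD : clear implicits.

Lemma frac_hom_mean_le w f (I : finType) (a : I -> (ar f).-tuple D) (c : rat) :
  (0 <= c)%R -> frac_hom cD cC w ->
  \sum_(p <- w) p.1%:E * (c%:E * \sum_i cC f (map_tuple p.2 (a i)))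
  <= c%:E * \sum_i cD f (a i).
Proof.
move=> c_ge0 [/ForallP w_ge0 _ w_hom].
have sum_ninfty g : \sum_i cC f (map_tuple g (a i)) != -oo.
  by rewrite esum_eqNy; apply/existsPn => i; rewrite (negbTE (cC_valued _)) andbF.
rewrite (big_cond_all w_ge0); under eq_bigr do rewrite muleCA.
rewrite -sume_distrr_ninfty => [|p p_ge0]; last exact: mule_neq_ninfty.
apply: lee_wpmul2l; first by rewrite lee_fin.
under eq_bigr do rewrite sume_distrr_ninfty //.
rewrite exchange_big; apply: lee_sum => i _.
by rewrite -(big_cond_all w_ge0); exact: w_hom.
Qed.

End FracHomMean.

Section Multisets.
Variables (D : finType) (m : nat).

Definition mset_seq (al : mset D m) : seq D :=
  flatten [seq nseq (mult al d) d | d <- enum D].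

Lemma count_mem_mset_seq al d : count_mem d (mset_seq al) = mult al d.
Proof.
rewrite count_flatten -map_comp sumnE big_map big_enum /=.
under eq_bigr do rewrite count_nseq.
rewrite (bigD1 d) //= eqxx mul1n big1 ?addn0 // => e.
by rewrite eq_sym => /negbTE ->.
Qed.

Lemma size_mset_seq al : size (mset_seq al) = m.
Proof.
rewrite size_flatten /shape -map_comp sumnE big_map big_enum /=.
under eq_bigr do rewrite size_nseq.
exact/eqP/(svalP al).
Qed.

Definition mset_tuple (al : mset D m) : m.-tuple D :=
  Tuple (introT eqP (size_mset_seq al)).

Definition realizes (k : nat) (t : k.-tuple (m.-tuple D))
    (al : k.-tuple (mset D m)) :=
  [forall l, forall d, count_mem d (tnth t l) == mult (tnth al l) d].

Lemma realizes_perm_eq k t (al : k.-tuple (mset D m)) j :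
  realizes t al -> perm_eq (tnth t j) (mset_tuple (tnth al j)).
Proof.
move=> /forallP/(_ j)/forallP t_al_j; apply/allP => d _.
by rewrite /= count_mem_mset_seq (eqP (t_al_j d)).
Qed.

End Multisets.

Definition symmetric_op (n : nat) (X Y : Type) (op : ('I_n -> X) -> Y) :=
  forall (x : 'I_n -> X) (s : 'S_n), op x = op (x \o s).

Lemma symmetric_op_perm_eq (n : nat) (T : eqType) (Y : Type)
    (op : ('I_n -> T) -> Y) (s t : n.-tuple T) :
  symmetric_op op -> perm_eq s t -> op (tnth s) = op (tnth t).
Proof.
move=> op_sym /tuple_permP[p s_def].
have -> : s = [tuple tnth t (p i) | i < n] by apply: val_inj.
rewrite (op_sym (tnth t) p); congr op; apply: functional_extensionality => i.
by rewrite tnth_mktuple.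
Qed.

Definition tuple_col (k n : nat) (T : Type) (t : k.-tuple (n.-tuple T))
    (i : 'I_n) :=
  [tuple tnth (tnth t j) i | j < k].

Section MultisetStructure.
Variables (S : finType) (ar : S -> nat) (C : Type) (cC : costs ar C).
Variables (D : finType) (cD : costs ar D) (m : nat).
Arguments cC : clear implicits.
Arguments cD : clear implicits.
Hypothesis cC_valued : valued_costs cC.

Definition pm_hom (g : D -> C) (op : ('I_m -> C) -> C) (al : mset D m) : C :=
  op (g \o tnth (mset_tuple al)).

Definition pm_weights (w : seq (rat * (D -> C)))
    (u : seq (rat * (('I_m -> C) -> C))) : seq (rat * (mset D m -> C)) :=
  prod_weights pm_hom w u.

Lemma map_pm_hom g op k (al : k.-tuple (mset D m)) t :
  symmetric_op op -> realizes t al ->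
  map_tuple (pm_hom g op) al
  = [tuple op (fun i => tnth (map_tuple g (tuple_col t i)) j) | j < k].
Proof.
move=> op_sym t_al; apply: eq_from_tnth => j.
rewrite tnth_map tnth_mktuple /pm_hom.
have /= <- := symmetric_op_perm_eq (op := fun x => op (g \o x)) _
  (realizes_perm_eq j t_al).
  congr op; apply: functional_extensionality => i.
  by rewrite /= tnth_map tnth_mktuple.
by move=> x s; exact: (op_sym (g \o x) s).
Qed.

Lemma sum_pm_hom_cost u g f (al : (ar f).-tuple (mset D m)) t :
  List.Forall (fun p => 0 <= p.1)%R u -> fully_symmetric u -> realizes t al ->
  \sum_(p <- u) p.1%:E * cC f (map_tuple (pm_hom g p.2) al)
  = \sum_(p <- u) p.1%:E *
      cC f [tuple p.2 (fun i => tnth (map_tuple g (tuple_col t i)) j) | j < ar f].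
Proof.
move=> u_ge0 u_sym t_al; apply: eq_big_Forall (List.Forall_and u_ge0 u_sym) _.
move=> [r op] /= [r_ge0 op_sym]; have [->|r_neq0] := eqVneq r 0%R.
  by rewrite !mul0e.
have op_sym' : symmetric_op op by apply: op_sym; rewrite lt_def r_neq0.
by rewrite (map_pm_hom g op_sym' t_al).
Qed.

Lemma pm_weights_cost_le w u f (al : (ar f).-tuple (mset D m)) t :
  frac_hom cD cC w -> frac_pol cC u -> fully_symmetric u -> realizes t al ->
  \sum_(q <- pm_weights w u) q.1%:E * cC f (map_tuple q.2 al)
  <= ((m%:R)^-1)%:E * \sum_(i < m) cD f (tuple_col t i).
Proof.
move=> w_hom [u_ge0 _ u_pol] u_sym t_al; have [/ForallP w_ge0 _ _] := w_hom.
rewrite (sum_prod_weights_mul _ _ (F := fun h => cC f (map_tuple h al)) u_ge0);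
  last by move=> h; exact: cC_valued.
apply: le_trans (frac_hom_mean_le cC_valued (tuple_col t) _ w_hom); last first.
  by rewrite invr_ge0 ler0n.
rewrite !(big_cond_all w_ge0); apply: lee_sum => -[r g] r_ge0.
apply: lee_wpmul2l; first by rewrite lee_fin.
by rewrite (sum_pm_hom_cost _ u_ge0 u_sym t_al); exact: u_pol.
Qed.

Lemma frac_hom_pm_weights w u :
  (0 < m)%N -> frac_hom cD cC w -> frac_pol cC u -> fully_symmetric u ->
  frac_hom (@Pm_cost S ar D cD m) cC (pm_weights w u).
Proof.
move=> m_gt0 w_hom u_pol u_sym.
have [w_ge0 w_sum1 _] := w_hom; have [u_ge0 u_sum1 _] := u_pol.
split; first exact: prod_weights_ge0.
  by rewrite sum_prod_weights w_sum1 u_sum1 mulr1.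
move=> f al; apply: lee_mul_bigmin => [|t t_al]; first by rewrite invr_gt0 ltr0n.
exact: pm_weights_cost_le.
Qed.

End MultisetStructure.

Theorem lemma9 (S : finType) (ar : S -> nat)
    (C : Type) (cC : costs ar C) (D : finType) (cD : costs ar D) (m : nat) :
  valued_costs cC -> valued_costs cD -> (2 <= m)%N ->
  exists_frac_hom cD cC ->
  has_fs_frac_pol m cC ->
  exists_frac_hom (@Pm_cost S ar D cD m) cC.
Proof.
move=> cC_valued _ m_ge2 [w w_hom] [u [u_pol u_sym]].
exists (@pm_weights C D m w u).
by apply: frac_hom_pm_weights => //; exact: leq_trans m_ge2.
Qed.
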